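(* Let $S=\{f_1,\dots,f_n\}$ be a set of polynomials in $\mathbb{Q}[\alpha_1,\dots,\alpha_r]$ and let $\sigma$ be a permutation of $\{\alpha_1,\dots,\alpha_r\}$. If $S$ is reducible with respect to $\sigma$, then every subset $L\subseteq S$ is reducible with respect to $\sigma$.
   Context: ''Irreducible factors'' are taken over $\mathbb{Q}$ and polynomials differing by a nonzero constant are identified. A compatibility graph for a finite set $S$ of polynomials is a graph with vertex set $S$. Reduction step: given $(S,C)$ with $S=\{f_1,\dots,f_n\}$ and a variable $\alpha$, the step is undefined if some $f_i$ has degree $>1$ in $\alpha$; otherwise write $f_i=g_i\alpha+h_i$ with $g_i=\partial f_i/\partial\alpha$, $h_i=f_i|_{\alpha=0}$, let $S^4=\{g_i\}\cup\{h_i\}\cup\{g_ih_j-h_ig_j: i\neq j,\ f_if_j\in E(C)\}$ and let $S_{(\alpha)}$ be the set of irreducible factors of members of $S^4$. Its compatibility graph $C_{(\alpha)}$: attach to each $m\in S_{(\alpha)}$ the labels $\{0,i\}$ whenever $m\mid g_i$; $\{i,\infty\}$ whenever $m\mid h_i$, and also $\{0,i\}$ if $h_i=f_i$; $\{i,j\}$ whenever $m\mid g_ih_j-h_ig_j$ with $f_i,f_j$ compatible; $m,m'$ are adjacent iff some label of $m$ meets some label of $m'$. Let $S_{[\sigma(1)]}=S_{(\sigma(1))}$ computed from $(S,\text{complete graph})$, and for $k\ge 2$ let $S_{[\sigma(1),\dots,\sigma(k)]}=\bigcap_{i} S_{[\sigma(1),\dots,\widehat{\sigma(i)},\dots,\sigma(k)](\sigma(i))}$,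 the intersection over those $i\le k$ for which the step is defined (undefined if there are none), with compatibility graph whose edge set is the intersection of the corresponding edge sets. $S$ is reducible with respect to $\sigma$ if for all $1\le i\le r-1$ the set $S_{[\sigma(1),\dots,\sigma(i)]}$ is defined and all its members have degree $\le 1$ in $\sigma(i+1)$. *)

From HB Require Import structures.
From mathcomp Require Import all_boot all_order all_algebra.
From mathcomp Require Import fingroup perm.
From mathcomp Require Import mpoly.
Set Implicit Arguments. Unset Strict Implicit. Unset Printing Implicit Defensive.
Import Order.TTheory GRing.Theory.
Local Open Scope ring_scope.

Section Reduction.
Variable r : nat.
Local Notation P := {mpoly rat[r]}.

(* A "set of polynomials" (identified up to nonzero constants) is encoded as
   a predicate closed under multiplication by nonzero rationals; a
   compatibility graph as a binary relation on polynomials (edge relation). *)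
Definition pset := P -> Prop.
Definition pgraph := P -> P -> Prop.

Definition assoc (p q : P) : Prop := exists2 c : rat, c != 0 & p = c *: q.

Definition pdvd (m p : P) : Prop := exists q : P, p = m * q.

Definition mirreducible (p : P) : Prop :=
  [/\ p != 0, p \isn't a GRing.unit &
      forall a b : P, p = a * b -> a \is a GRing.unit \/ b \is a GRing.unit].

Definition degv (i : 'I_r) (p : P) : nat := (\max_(m <- msupp p) m i)%N.

Definition setOf (s : seq P) : pset := fun f => exists2 f0, f0 \in s & assoc f f0.

Definition complete (S : pset) : pgraph :=
  fun f f' => [/\ S f, S f' & ~ assoc f f'].

Definition gpart (a : 'I_r) (f : P) : P := mderiv a f.
Definition hpart (a : 'I_r) (f : P) : P :=
  f \mPo [tuple (if j == a then 0 else 'X_j) | j < r].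

Definition step_defined (S : pset) (a : 'I_r) : Prop :=
  forall f, S f -> (degv a f <= 1)%N.

Definition S4 (S : pset) (C : pgraph) (a : 'I_r) : pset := fun p =>
  (exists2 f, S f & p = gpart a f) \/
  (exists2 f, S f & p = hpart a f) \/
  (exists f f', [/\ S f, S f', C f f' &
      p = gpart a f * hpart a f' - hpart a f * gpart a f']).

Definition stepS (S : pset) (C : pgraph) (a : 'I_r) : pset := fun m =>
  mirreducible m /\ exists p, [/\ S4 S C a p, p != 0 & pdvd m p].

(* label entries: 0, an index i (represented by f_i), infinity *)
Inductive lab := L0 | LIdx of P | LInf.

Definition labeq (x y : lab) : Prop :=
  match x, y with
  | L0, L0 => True
  | LInf, LInf => True
  | LIdx f, LIdx f' => assoc f f'
  | _, _ => False
  end.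

Definition haslabel (S : pset) (C : pgraph) (a : 'I_r) (m : P) (x y : lab) : Prop :=
  (exists2 f, S f & [/\ x = L0, y = LIdx f & pdvd m (gpart a f)]) \/
  (exists2 f, S f & [/\ x = LIdx f, y = LInf & pdvd m (hpart a f)]) \/
  (exists2 f, S f & [/\ hpart a f = f, x = L0, y = LIdx f & pdvd m (hpart a f)]) \/
  (exists f f', [/\ S f /\ S f', C f f', x = LIdx f, y = LIdx f' &
      pdvd m (gpart a f * hpart a f' - hpart a f * gpart a f')]).

Definition meet (x y x' y' : lab) : Prop :=
  labeq x x' \/ labeq x y' \/ labeq y x' \/ labeq y y'.

Definition stepC (S : pset) (C : pgraph) (a : 'I_r) : pgraph := fun m m' =>
  [/\ stepS S C a m, stepS S C a m', ~ assoc m m' &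
      exists x y x' y', [/\ haslabel S C a m x y, haslabel S C a m' x' y'
                          & meet x y x' y']].

(* S_[l] for a list l of variables: returns (defined?, set, graph).
   The fuel k is the length of l; k = 0 gives (S, complete graph), so that
   the uniform formula at k = 1 gives S_[v] = S_(v) computed from
   (S, complete graph). *)
Fixpoint red (S : pset) (k : nat) (l : seq 'I_r) : Prop * pset * pgraph :=
  match k with
  | 0 => (True, S, complete S)
  | k'.+1 =>
    (* the index i of the paper corresponds to a decomposition
       l = l1 ++ v :: l2, with v = sigma(i) and l1 ++ l2 the list with
       sigma(i) removed *)
    let ok l1 v l2 := [/\ l = l1 ++ v :: l2, (red S k' (l1 ++ l2)).1.1 &
                          step_defined (red S k' (l1 ++ l2)).1.2 v] in
    (exists l1 v l2, ok l1 v l2,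
     fun m => forall l1 v l2, ok l1 v l2 ->
        stepS (red S k' (l1 ++ l2)).1.2 (red S k' (l1 ++ l2)).2 v m,
     fun m m' => forall l1 v l2, ok l1 v l2 ->
        stepC (red S k' (l1 ++ l2)).1.2 (red S k' (l1 ++ l2)).2 v m m')
  end.

Definition Sbr (S : pset) (l : seq 'I_r) := red S (size l) l.

(* S is reducible w.r.t. sigma: for 1 <= i <= r-1, S_[sigma(1..i)] is defined
   and all its members have degree <= 1 in sigma(i+1).  With 0-based
   ordinals j = i ranges over 1..r-1, the first i variables are
   take j [seq sigma k | k <- enum 'I_r] and sigma(i+1) is sigma j. *)
Definition reducible (S : pset) (sigma : {perm 'I_r}) : Prop :=
  forall j : 'I_r, (0 < j)%N ->
    let l := take j [seq sigma k | k <- enum 'I_r] in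
    (Sbr S l).1.1 /\ forall m, (Sbr S l).1.2 m -> (degv (sigma j) m <= 1)%N.

End Reduction.

From HB Require Import structures.
From mathcomp Require Import all_boot all_order all_algebra.
From mathcomp Require Import fingroup perm.
From mathcomp Require Import mpoly.

(* Every construction of the reduction is monotone: shrinking the input set
   and graph shrinks S^4, the irreducible factors, the labels and hence the
   compatibility graph, and it can only make more reduction steps defined.
   For S_[l] the index set of the intersection is therefore larger for L than
   for S, while each intersected set is smaller, so by induction on the length
   of l every S_[l] computed from L is defined whenever the one computed from S
   is, and is contained in it; the degree bounds then transfer. *)

Set Implicit Arguments.
Unset Strict Implicit.

Section Monotonicity.
Variable r : nat.
Implicit Types (S L : pset r) (C D : pgraph r) (a : 'I_r).

Definition subpset S L := forall f, S f -> L f.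
Definition subpgraph C D := forall f f', C f f' -> D f f'.

Lemma complete_sub S L : subpset L S -> subpgraph (complete L) (complete S).
Proof. by move=> sLS f f' [Lf Lf' nfg]; split; auto. Qed.

Lemma step_defined_sub S L a : subpset L S -> step_defined S a -> step_defined L a.
Proof. by move=> sLS Sa f /sLS /Sa. Qed.

Section Step.
Variables (S L : pset r) (C D : pgraph r) (a : 'I_r).
Hypotheses (sLS : subpset L S) (sDC : subpgraph D C).

Lemma S4_sub : subpset (S4 L D a) (S4 S C a).
Proof.
move=> p [[f Lf ->]|[[f Lf ->]|[f [f' [Lf Lf' Dff' ->]]]]].
- by left; exists f; auto.
- by right; left; exists f; auto.
- by right; right; exists f, f'; split; auto.
Qed.

Lemma stepS_sub : subpset (stepS L D a) (stepS S C a).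
Proof.
move=> m [irr_m [p [S4p p_neq0 m_dvd_p]]].
by split=> //; exists p; split=> //; apply: S4_sub.
Qed.

Lemma haslabel_sub m x y : haslabel L D a m x y -> haslabel S C a m x y.
Proof.
move=> [[f Lf H]|[[f Lf H]|[[f Lf H]|[f [f' [[Lf Lf'] Dff' Hx Hy Hdvd]]]]]].
- by left; exists f; auto.
- by right; left; exists f; auto.
- by right; right; left; exists f; auto.
- by right; right; right; exists f, f'; split; auto.
Qed.

Lemma stepC_sub : subpgraph (stepC L D a) (stepC S C a).
Proof.
move=> m m' [Sm Sm' nmm' [x [y [x' [y' [lab_m lab_m' meet_xy]]]]]].
split; [exact: stepS_sub | exact: stepS_sub | by [] |].
by exists x, y, x', y'; split=> //; apply: haslabel_sub.
Qed.

End Step.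

Lemma red_sub S L k l : subpset L S ->
  [/\ (red S k l).1.1 -> (red L k l).1.1,
      subpset (red L k l).1.2 (red S k l).1.2 &
      subpgraph (red L k l).2 (red S k l).2].
Proof.
move=> sLS; elim: k l => [|k IHk] l /=; first by split=> //; apply: complete_sub.
pose ok T l1 v l2 := [/\ l = l1 ++ v :: l2, (red T k (l1 ++ l2)).1.1
                       & step_defined (red T k (l1 ++ l2)).1.2 v].
have okLS l1 v l2 : ok S l1 v l2 -> ok L l1 v l2.
  case: (IHk (l1 ++ l2)) => defLS redLS _ [l_eq defS stepS_def].
  by split; [| exact: defLS | exact: step_defined_sub redLS stepS_def].
split.
- by move=> [l1 [v [l2 okS]]]; exists l1, v, l2; apply: okLS.
- move=> m Lm l1 v l2 okS; case: (IHk (l1 ++ l2)) => _ redLS graphLS.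
  exact: stepS_sub redLS graphLS _ (Lm _ _ _ (okLS _ _ _ okS)).
- move=> m m' Lmm' l1 v l2 okS; case: (IHk (l1 ++ l2)) => _ redLS graphLS.
  exact: stepC_sub redLS graphLS _ _ (Lmm' _ _ _ (okLS _ _ _ okS)).
Qed.

Lemma reducible_sub S L (sigma : {perm 'I_r}) :
  subpset L S -> reducible S sigma -> reducible L sigma.
Proof.
move=> sLS redS j j_gt0; case: (redS j j_gt0) => defS degS.
case: (red_sub (size (take j [seq sigma k | k <- enum 'I_r]))
               (take j [seq sigma k | k <- enum 'I_r]) sLS) => defLS redLS _.
by split=> [|m /redLS /degS]; first exact: defLS.
Qed.

End Monotonicity.

Theorem mainTheorem4 (r : nat) (S L : seq {mpoly rat[r]}) (sigma : {perm 'I_r}) :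
  (forall f, setOf L f -> setOf S f) ->
  reducible (setOf S) sigma ->
  reducible (setOf L) sigma.
Proof. exact: reducible_sub. Qed.
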